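(* Let $\widehat\Gamma$ be a timed region graph, let $\mu\in\Delta_{\mathrm{Min}}$ be regionally constant and let $(T^\mu,D^\mu)\models\mathrm{Opt}_{\mathrm{Max}}(\widehat\Gamma\upharpoonright\mu)$. If $\mathrm{Improve}_{\mathrm{Min}}(\mu,(T^\mu,D^\mu))=\mu$, then $(T^\mu,D^\mu)\models\mathrm{Opt}_{\mathrm{MinMax}}(\widehat\Gamma)$.
   Context: Fix $k\in\mathbb N$. Let $C$ be a finite set of clocks. A clock valuation is a function $\nu:C\to[0,k]$; $V$ is the set of clock valuations. For $t\ge 0$ let $(\nu+t)(c)=\nu(c)+t$; for $C'\subseteq C$ let $\mathrm{Reset}(\nu,C')(c)=0$ if $c\in C'$ and $=\nu(c)$ otherwise. Simple clock constraints are $c\bowtie i$ or $c-c'\bowtie i$ with $c,c'\in C$, $i\in\{0,\dots,k\}$, ${\bowtie}\in\{<,>,=,\le,\ge\}$. A clock region is an equivalence class of $V$ under ''satisfies the same simple clock constraints''; a clock zone is a convex union of clock regions. For a finite set $L$ of locations, a configuration is $s=(\ell,\nu)\in Q=L\times V$; write $s(c)=\nu(c)$ and $s+t=(\ell,\nu+t)$ (defined if $\nu+t\in V$). A region is $(\ell,P)$ (identified with $\{(\ell,\nu):\nu\in P\}$) for a clock region $P$; $[s]$ is the region containing $s$, $\mathcal R$ the set of regions, $\overline R$ the topological closure of $R$. A zone is a set $\{(\ell,\nu):\nu\in W_\ell\}$ with each $W_\ell$ a clock zone. A timed automaton $\mathcal T=(L,C,S,A,E,\delta,\rho,F)$ consists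 of finite $L$, finite $C$, a zone $S\subseteq Q$ of states, a finite set $A$ of actions, $E:A\to 2^S$ with every $E(a)$ a zone, $\delta:L\times A\to L$, $\rho:A\to 2^C$, and a zone $F\subseteq S$ of final states. For $s=(\ell,\nu)$: $s\to_t s'$ if $s'=s+t$ is defined and $s+t'\in S$ for all $t'\in[0,t]$; $s\xrightarrow{a}s'$ if $s'=(\delta(\ell,a),\mathrm{Reset}(\nu,\rho(a)))$, $s,s'\in S$ and $s\in E(a)$. For $(a,t)\in A\times\mathbb R_{\ge0}$, $\mathrm{Succ}(s,(a,t))=(\delta(\ell,a),\mathrm{Reset}(\nu+t,\rho(a)))$. A reachability-time game is $\Gamma=(\mathcal T,L_{\mathrm{Min}},L_{\mathrm{Max}})$ with $(L_{\mathrm{Min}},L_{\mathrm{Max}})$ a partition of $L$; $S_{\mathrm{Min}}$, $S_{\mathrm{Max}}$, $\mathcal R_{\mathrm{Min}}$, $\mathcal R_{\mathrm{Max}}$ are the states/regions with location in $L_{\mathrm{Min}}$ resp. $L_{\mathrm{Max}}$. Region relations: $R\to_*R'$ if there are $s\in R,s'\in R'$, $t\ge 0$ with $s\to_t s'$; $R\to_{+1}R'$ ($R'$ is the time successor of $R$) if $R\to_*R'$, $R\ne R'$, and $R\to_*R''\to_*R'$ implies $R''\in\{R,R'\}$; $R\xrightarrow aR'$ if there are $s\in R,s'\in R'$ with $s\xrightarrow a s'$. $R$ is thin if for all $s\in R$ and $\varepsilon>0$, $[s+\varepsilon]\neq[s]$. For thin $R''$, $b\in\{0,\dots,k\}$,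 $c\in C$: $R\to_{b,c}R''$ if $R\to_*R''$ and $s+(b-s(c))\in R''$ for all $s\in R$. Simple timed actions: $\mathcal A=A\times\{0,\dots,k\}\times C$; for $\alpha=(a,b,c)$, $t(s,\alpha)=b-s(c)$ if $s(c)\le b$ and $0$ otherwise, and $\mathrm{Succ}(s,\alpha)=\mathrm{Succ}(s,(a,t(s,\alpha)))$. For $F$ defined on $\overline{R'}$: $F^\oplus_\alpha(s)=t(s,\alpha)+F(\mathrm{Succ}(s,\alpha))$ and $F^\boxplus_\alpha(s)=1+F(\mathrm{Succ}(s,\alpha))$. Timed region graph $\widehat\Gamma=(\mathcal R,\mathcal M)$: $(R,\alpha,R')\in\mathcal M$ with $\alpha=(a,b,c)$ iff (i) $R\to_{b,c}R''\xrightarrow aR'$ for some $R''$; or (ii) $R\in\mathcal R_{\mathrm{Min}}$ and $R\to_{b,c}R''\to_{+1}R'''\xrightarrow aR'$ for some $R'',R'''$; or (iii) $R\in\mathcal R_{\mathrm{Max}}$ and $R\to_{b,c}R''$, $R'''\to_{+1}R''$, $R'''\xrightarrow aR'$ for some $R'',R'''$. (For $(R,\alpha,R')\in\mathcal M$ and $s\in R$, $\mathrm{Succ}(s,\alpha)\in\overline{R'}$.) Regional functions: maps $T$ assigning to each region $R$ a function $T(R):\overline R\to\mathbb R\cup\{\infty\}$ (resp. $D(R):\overline R\to\mathbb N\cup\{\infty\}$); $\widetilde T(s)=T([s])(s)$. Lexicographic order: $(x,y)\le^{\mathrm{lex}}(x',y')$ iff $x<x'$, or $x=x'$ and $y\le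 y'$. Strategies and subgraphs: a positional strategy for Min in $\widehat\Gamma$ is a map $\mu:S_{\mathrm{Min}}\to\mathcal M$ with $\mu(s)$ of the form $([s],\alpha,R)$; $\Delta_{\mathrm{Min}}$ is the set of these. $\mu$ is regionally constant if $[s]=[s']$ implies $\mu(s)=\mu(s')$ (write $\mu(R)$); then the strategy subgraph $\widehat\Gamma\upharpoonright\mu$ keeps all moves out of $\mathcal R_{\mathrm{Max}}$ and, out of each $R\in\mathcal R_{\mathrm{Min}}$, only $\mu(R)$. For $s\in S$ let $M_*(s,(T,D))$ be the set of moves $m=([s],\alpha,R')\in\mathcal M$ at which $(T(R')^\oplus_\alpha(s),D(R')^\boxplus_\alpha(s))$ is lexicographically minimal. Fix a function $\mathrm{Choose}$ selecting an element of each nonempty set of moves. $\mathrm{Improve}_{\mathrm{Min}}(\mu,(T,D))(s)=\mu(s)$ if $\mu(s)\in M_*(s,(T,D))$, and $=\mathrm{Choose}(M_*(s,(T,D)))$ otherwise. Optimality equations for a graph $G=(\mathcal R,\mathcal M')$, $\mathcal M'\subseteq\mathcal M$: $(T,D)\models\mathrm{Opt}_{\mathrm{Max}}(G)$ iff $(\widetilde T(s),\widetilde D(s))=(0,0)$ for $s\in F$ and, for all $s\in S\setminus F$, $(\widetilde T(s),\widetilde D(s))=\max^{\mathrm{lex}}\{(T(R')^\oplus_\alpha(s),D(R')^\boxplus_\alpha(s)):([s],\alpha,R')\in\mathcal M'\}$. $(T,D)\models\mathrm{Opt}_{\mathrm{MinMax}}(G)$ iff for $s\in F$ the pair is $(0,0)$,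 for $s\in S_{\mathrm{Min}}\setminus F$ it equals the $\min^{\mathrm{lex}}$ of that set, and for $s\in S_{\mathrm{Max}}\setminus F$ it equals the $\max^{\mathrm{lex}}$ of that set. *)

From Stdlib Require Import Reals List Classical ClassicalEpsilon.
Open Scope R_scope.
Set Implicit Arguments.

Inductive cmp := CLt | CGt | CEq | CLe | CGe.

Definition cmpR (o : cmp) (x y : R) : Prop :=
  match o with
  | CLt => x < y | CGt => x > y | CEq => x = y | CLe => x <= y | CGe => x >= y
  end.

Inductive sconstr (C : Type) :=
  | SC1 : C -> cmp -> nat -> sconstr C
  | SC2 : C -> C -> cmp -> nat -> sconstr C.

Definition sc_bound C (g : sconstr C) : nat :=
  match g with SC1 _ _ i => i | SC2 _ _ _ i => i end.

Definition sat C (v : C -> R) (g : sconstr C) : Prop :=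
  match g with
  | SC1 c o i => cmpR o (v c) (INR i)
  | SC2 c c' o i => cmpR o (v c - v c') (INR i)
  end.

Definition inV (k : nat) C (v : C -> R) : Prop := forall c, 0 <= v c <= INR k.

Definition clk_equiv (k : nat) C (v v' : C -> R) : Prop :=
  inV k v /\ inV k v' /\
  forall g : sconstr C, (sc_bound g <= k)%nat -> (sat v g <-> sat v' g).

Definition clock_zone (k : nat) C (W : (C -> R) -> Prop) : Prop :=
  (forall v, W v -> inV k v) /\
  (forall v v', W v -> clk_equiv k v v' -> W v') /\
  (forall v v' lam, W v -> W v' -> 0 <= lam <= 1 ->
     W (fun c => lam * v c + (1 - lam) * v' c)).

Definition zone (k : nat) L C (Z : L * (C -> R) -> Prop) : Prop :=
  forall l, clock_zone k (fun v => Z (l, v)).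

Definition finite_type (X : Type) : Prop := exists xs : list X, forall x, In x xs.

Record TA (k : nat) := mkTA {
  Loc : Type;
  Clk : Type;
  Act : Type;
  Loc_fin : finite_type Loc;
  Clk_fin : finite_type Clk;
  Act_fin : finite_type Act;
  St : Loc * (Clk -> R) -> Prop;
  St_zone : zone k St;
  En : Act -> Loc * (Clk -> R) -> Prop;
  En_zone : forall a, zone k (En a);
  En_sub : forall a s, En a s -> St s;
  delta : Loc -> Act -> Loc;
  rho : Act -> Clk -> bool;
  Fin : Loc * (Clk -> R) -> Prop;
  Fin_zone : zone k Fin;
  Fin_sub : forall s, Fin s -> St s
}.

(** (L_Min, L_Max) is the partition { l | isMin l = true }, { l | isMin l = false } *)
Record RTG (k : nat) := mkRTG {
  TAof :> TA k;
  isMin : Loc TAof -> bool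
}.

Inductive Rinf := RF (r : R) | RInf.
Inductive Ninf := NF (n : nat) | NInf.

Definition Radd (t : R) (x : Rinf) : Rinf :=
  match x with RF r => RF (t + r) | RInf => RInf end.
Definition Nsucc (x : Ninf) : Ninf :=
  match x with NF n => NF (S n) | NInf => NInf end.

Definition Rinf_lt (x y : Rinf) : Prop :=
  match x, y with
  | RF a, RF b => a < b
  | RF _, RInf => True
  | RInf, _ => False
  end.
Definition Ninf_le (x y : Ninf) : Prop :=
  match x, y with
  | NF a, NF b => (a <= b)%nat
  | _, NInf => True
  | NInf, NF _ => False
  end.

Definition lexle (p q : Rinf * Ninf) : Prop :=
  Rinf_lt (fst p) (fst q) \/ (fst p = fst q /\ Ninf_le (snd p) (snd q)).

Definition is_lexmax (P : Rinf * Ninf -> Prop) (p : Rinf * Ninf) : Prop :=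
  P p /\ forall q, P q -> lexle q p.
Definition is_lexmin (P : Rinf * Ninf -> Prop) (p : Rinf * Ninf) : Prop :=
  P p /\ forall q, P q -> lexle p q.

Section RegionGraph.
Variable k : nat.
Variable G : RTG k.

Definition conf := (Loc G * (Clk G -> R))%type.
Definition inQ (s : conf) : Prop := inV k (snd s).
Definition shift (s : conf) (t : R) : conf := (fst s, fun c => snd s c + t).
Definition reset (v : Clk G -> R) (X : Clk G -> bool) : Clk G -> R :=
  fun c => if X c then 0 else v c.

Definition delay (s : conf) (t : R) (s' : conf) : Prop :=
  0 <= t /\ inQ s' /\ s' = shift s t /\
  forall t', 0 <= t' <= t -> St G (shift s t').

Definition astep (s : conf) (a : Act G) (s' : conf) : Prop :=
  s' = (delta G (fst s) a, reset (snd s) (rho G a)) /\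
  St G s /\ St G s' /\ En G a s.

Definition region := conf -> Prop.
Definition rg (s : conf) : region :=
  fun s' => fst s' = fst s /\ clk_equiv k (snd s) (snd s').
Definition isReg (Rg : region) : Prop := exists s, inQ s /\ Rg = rg s.

Definition RMin (Rg : region) : Prop := exists s, Rg s /\ isMin G (fst s) = true.
Definition RMax (Rg : region) : Prop := exists s, Rg s /\ isMin G (fst s) = false.

Definition reach (R1 R2 : region) : Prop :=
  exists s s' t, R1 s /\ R2 s' /\ delay s t s'.
Definition tsucc (R1 R2 : region) : Prop :=
  reach R1 R2 /\ R1 <> R2 /\
  forall R3, isReg R3 -> reach R1 R3 -> reach R3 R2 -> R3 = R1 \/ R3 = R2.
Definition areach (R1 : region) (a : Act G) (R2 : region) : Prop :=
  exists s s', R1 s /\ R2 s' /\ astep s a s'.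
Definition thin (Rg : region) : Prop :=
  forall s, Rg s -> forall eps, eps > 0 -> rg (shift s eps) <> rg s.
Definition bc_reach (R1 : region) (b : nat) (c : Clk G) (R2 : region) : Prop :=
  isReg R2 /\ thin R2 /\ reach R1 R2 /\
  forall s, R1 s -> R2 (shift s (INR b - snd s c)).

(** simple timed actions (a,b,c); b ∈ {0..k} is enforced in [Moves] *)
Definition stact := (Act G * nat * Clk G)%type.

Definition tdelay (s : conf) (al : stact) : R :=
  let '(a, b, c) := al in
  if Rle_dec (snd s c) (INR b) then INR b - snd s c else 0.

Definition Succ (s : conf) (al : stact) : conf :=
  let '(a, b, c) := al in
  (delta G (fst s) a,
   reset (fun c' => snd s c' + tdelay s al) (rho G a)).

Definition move := (region * stact * region)%type.
Definition src (m : move) : region := fst (fst m).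
Definition mact (m : move) : stact := snd (fst m).
Definition tgt (m : move) : region := snd m.

Definition Moves (m : move) : Prop :=
  let '(R1, al, R2) := m in
  let '(a, b, c) := al in
  isReg R1 /\ isReg R2 /\ (b <= k)%nat /\
  ( (exists R3, bc_reach R1 b c R3 /\ areach R3 a R2)
  \/ (RMin R1 /\ exists R3 R4, bc_reach R1 b c R3 /\ isReg R4 /\
                               tsucc R3 R4 /\ areach R4 a R2)
  \/ (RMax R1 /\ exists R3 R4, bc_reach R1 b c R3 /\ isReg R4 /\
                               tsucc R4 R3 /\ areach R4 a R2) ).

(** regional functions: T(R) is only ever evaluated on the closure of R *)
Definition RegT := region -> conf -> Rinf.
Definition RegD := region -> conf -> Ninf.
Definition tilde X (F : region -> conf -> X) (s : conf) : X := F (rg s) s.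

Definition mval (T : RegT) (D : RegD) (s : conf) (m : move) : Rinf * Ninf :=
  (Radd (tdelay s (mact m)) (T (tgt m) (Succ s (mact m))),
   Nsucc (D (tgt m) (Succ s (mact m)))).

Definition SMin (s : conf) : Prop := St G s /\ isMin G (fst s) = true.

Definition is_strategy (mu : conf -> move) : Prop :=
  forall s, SMin s -> Moves (mu s) /\ src (mu s) = rg s.

Definition reg_const (mu : conf -> move) : Prop :=
  forall s s', SMin s -> SMin s' -> rg s = rg s' -> mu s = mu s'.

Definition restrict (mu : conf -> move) (m : move) : Prop :=
  Moves m /\ (RMax (src m) \/ exists s, SMin s /\ src m = rg s /\ mu s = m).

Definition OptMax (Mg : move -> Prop) (T : RegT) (D : RegD) : Prop :=
  forall s, St G s ->
    (Fin G s -> tilde T s = RF 0 /\ tilde D s = NF 0) /\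
    (~ Fin G s ->
       is_lexmax (fun p => exists m, Mg m /\ src m = rg s /\ p = mval T D s m)
                 (tilde T s, tilde D s)).

Definition OptMinMax (Mg : move -> Prop) (T : RegT) (D : RegD) : Prop :=
  forall s, St G s ->
    (Fin G s -> tilde T s = RF 0 /\ tilde D s = NF 0) /\
    (~ Fin G s -> isMin G (fst s) = true ->
       is_lexmin (fun p => exists m, Mg m /\ src m = rg s /\ p = mval T D s m)
                 (tilde T s, tilde D s)) /\
    (~ Fin G s -> isMin G (fst s) = false ->
       is_lexmax (fun p => exists m, Mg m /\ src m = rg s /\ p = mval T D s m)
                 (tilde T s, tilde D s)).

Definition Mstar (T : RegT) (D : RegD) (s : conf) (m : move) : Prop :=
  Moves m /\ src m = rg s /\
  forall m', Moves m' -> src m' = rg s -> lexle (mval T D s m) (mval T D s m').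

Definition choose_spec (Choose : (move -> Prop) -> move) : Prop :=
  forall X : move -> Prop, (exists m, X m) -> X (Choose X).

Definition Improve (Choose : (move -> Prop) -> move) (mu : conf -> move)
  (T : RegT) (D : RegD) (s : conf) : move :=
  if excluded_middle_informative (Mstar T D s (mu s)) then mu s
  else Choose (Mstar T D s).

End RegionGraph.

From Stdlib Require Import Reals.
From Stdlib Require Import List Lra Lia Classical ClassicalEpsilon FunctionalExtensionality PropExtensionality.
Import ListNotations.
Open Scope R_scope.

(** Let (T,D) solve the Max-optimality equations of the strategy subgraph
    Γ̂↾μ and suppose Improve_Min(μ,(T,D)) = μ.
    - At a Max configuration s the subgraph keeps every move out of [s], so
      the lexicographic maximum required by Opt_MinMax(Γ̂) is the one given
      by Opt_Max(Γ̂↾μ).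
    - At a Min configuration s the only subgraph move out of [s] is μ(s)
      (μ is regionally constant), so (T̃(s),D̃(s)) is the value of μ(s).
      The set M_*(s) of lexicographically optimal moves is nonempty, because
      there are finitely many regions, hence finitely many move values out of
      [s]; so Improve = μ forces μ(s) ∈ M_*(s), i.e. its value is minimal. *)

Definition listed {X : Type} (P : X -> Prop) : Prop :=
  exists l, forall x, P x -> In x l.

Lemma Ninf_le_total x y : Ninf_le x y \/ Ninf_le y x.
Proof. destruct x as [n|], y as [m|]; simpl; auto; lia. Qed.

Lemma lexle_refl p : lexle p p.
Proof. right; split; [reflexivity|]. destruct (snd p); simpl; auto. Qed.

Lemma lexle_total p q : lexle p q \/ lexle q p.
Proof.
  destruct p as [[a|] n1], q as [[b|] n2]; unfold lexle; simpl; auto.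
  - destruct (total_order_T a b) as [[H|H]|H]; auto.
    subst. destruct (Ninf_le_total n1 n2); auto.
  - destruct (Ninf_le_total n1 n2); auto.
Qed.

Lemma lexle_trans p q r : lexle p q -> lexle q r -> lexle p r.
Proof.
  destruct p as [[a|] [n|]], q as [[b|] [m|]], r as [[c|] [o|]]; unfold lexle; simpl;
  intros [H1|[E1 H1]] [H2|[E2 H2]];
  try discriminate; try contradiction;
  try (injection E1; intro); try (injection E2; intro); subst;
  intuition (try lra; try lia).
Qed.

Lemma lexmin_in_list (P : Rinf * Ninf -> Prop) (l : list (Rinf * Ninf)) :
  (exists x, P x /\ In x l) ->
  exists p, P p /\ forall q, P q -> In q l -> lexle p q.
Proof.
  induction l as [|x l IH]; intros [y [Py Iy]]; [destruct Iy|].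
  destruct (classic (exists z, P z /\ In z l)) as [Hl|Hl].
  - destruct (IH Hl) as [p [Pp Hp]].
    destruct (classic (P x)) as [Px|Px].
    + destruct (lexle_total x p) as [Hxp|Hpx].
      * exists x; split; auto. intros q Pq [<-|Iq]; [apply lexle_refl|].
        exact (lexle_trans _ _ _ Hxp (Hp q Pq Iq)).
      * exists p; split; auto. intros q Pq [<-|Iq]; auto.
    + exists p; split; auto. intros q Pq [<-|Iq]; [contradiction|auto].
  - assert (Px : P x) by (destruct Iy as [<-|Iy]; [exact Py | exfalso; eauto]).
    exists x; split; auto. intros q Pq [<-|Iq]; [apply lexle_refl | exfalso; eauto].
Qed.

Lemma listed_lexmin (P : Rinf * Ninf -> Prop) :
  listed P -> (exists x, P x) -> exists p, is_lexmin P p.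
Proof.
  intros [l Hl] [x Px].
  destruct (lexmin_in_list P l) as [p [Pp Hp]]; eauto.
  exists p; split; auto.
Qed.

Lemma listed_image {X K Z : Type} (P : X -> Prop) (key : X -> K) (F : X -> Z)
  (lk : list K) :
  (forall x, P x -> In (key x) lk) ->
  (forall x y, P x -> P y -> key x = key y -> F x = F y) ->
  listed (fun z => exists x, P x /\ z = F x).
Proof.
  intros Hkey HF.
  assert (Hind : forall lk', exists lz, forall x, P x -> In (key x) lk' -> In (F x) lz).
  { induction lk' as [|kk lk' [lz Hlz]]; [exists nil; intros x _ []|].
    destruct (classic (exists x, P x /\ key x = kk)) as [[x0 [P0 K0]]|Hn].
    - exists (F x0 :: lz). intros x Px [E|I]; [left; apply HF; congruence | right; auto].
    - exists lz. intros x Px [E|I]; auto. exfalso; eauto. }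
  destruct (Hind lk) as [lz Hlz]. exists lz. intros z [x [Px ->]]; auto.
Qed.

Fixpoint bool_lists (n : nat) : list (list bool) :=
  match n with
  | O => [nil]
  | S n => map (cons true) (bool_lists n) ++ map (cons false) (bool_lists n)
  end.

Lemma bool_lists_complete bl : In bl (bool_lists (length bl)).
Proof.
  induction bl as [|b bl IH]; simpl; auto.
  apply in_or_app. destruct b; [left|right]; apply in_map; auto.
Qed.

Lemma map_eq_in {A B : Type} (f h : A -> B) (l : list A) (x : A) :
  map f l = map h l -> In x l -> f x = h x.
Proof.
  induction l; simpl; intros E I; [destruct I|].
  injection E; intros; destruct I; subst; auto.
Qed.

Section Constraints.
Context {C : Type}.

Definition bounded_constraints (cl : list C) (k : nat) : list (sconstr C) :=
  let ol := [CLt; CGt; CEq; CLe; CGe] in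
  let il := seq 0 (S k) in
  map (fun p => match p with (c, o, i) => SC1 c o i end)
      (list_prod (list_prod cl ol) il) ++
  map (fun p => match p with (c, c', o, i) => SC2 c c' o i end)
      (list_prod (list_prod (list_prod cl cl) ol) il).

Lemma bounded_constraints_complete (cl : list C) (k : nat) (g : sconstr C) :
  (forall c, In c cl) -> (sc_bound g <= k)%nat -> In g (bounded_constraints cl k).
Proof.
  intros Hcl Hg. unfold bounded_constraints.
  assert (Ho : forall o : cmp, In o [CLt; CGt; CEq; CLe; CGe]) by (destruct o; simpl; tauto).
  assert (Hi : In (sc_bound g) (seq 0 (S k))) by (apply in_seq; lia).
  destruct g as [c o i|c c' o i]; simpl in Hi; apply in_or_app.
  - left. apply (in_map (fun p => match p with (c, o, i) => SC1 c o i end) _ (c, o, i)).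
    repeat apply in_prod; auto.
  - right. apply (in_map (fun p => match p with (c, c', o, i) => SC2 c c' o i end) _ (c, c', o, i)).
    repeat apply in_prod; auto.
Qed.

Definition signature (gs : list (sconstr C)) (v : C -> R) : list bool :=
  map (fun g => if excluded_middle_informative (sat v g) then true else false) gs.

Lemma signature_sat (gs : list (sconstr C)) (v v' : C -> R) (g : sconstr C) :
  signature gs v = signature gs v' -> In g gs -> (sat v g <-> sat v' g).
Proof.
  intros E Ig. pose proof (map_eq_in _ _ _ g E Ig) as H; simpl in H.
  destruct (excluded_middle_informative (sat v g));
  destruct (excluded_middle_informative (sat v' g)); try discriminate; tauto.
Qed.

End Constraints.

Section RegionGraphFacts.
Context {k : nat} {G : RTG k}.

Lemma St_inQ (s : conf G) : St G s -> inQ s.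
Proof. destruct s as [l v]. intro H. exact (proj1 (St_zone (TAof G) l) v H). Qed.

Lemma rg_self (s : conf G) : St G s -> rg s s.
Proof.
  intro Hs. pose proof (St_inQ _ Hs) as Hq.
  do 3 (split; auto). intros g _; tauto.
Qed.

Lemma rg_ext (x y : conf G) :
  inQ x -> inQ y -> fst x = fst y ->
  (forall g, (sc_bound g <= k)%nat -> (sat (snd x) g <-> sat (snd y) g)) ->
  rg x = rg y.
Proof.
  intros Hx Hy Ef Hg. extensionality s'. apply propositional_extensionality.
  unfold rg, clk_equiv. rewrite Ef.
  split; intros [A [_ [C' D']]]; refine (conj A (conj _ (conj C' _))); auto;
  intros g Hb; specialize (Hg g Hb); specialize (D' g Hb); tauto.
Qed.

(** There are finitely many regions: a region is determined by a location
    and the signature of the (finitely many) bounded constraints. *)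
Lemma regions_listed : listed (@isReg k G).
Proof.
  destruct (Loc_fin G) as [ll Hll]. destruct (Clk_fin G) as [cl Hcl].
  set (gs := bounded_constraints cl k).
  destruct (listed_image (@inQ k G) (fun s : conf G => (fst s, signature gs (snd s)))
              (@rg k G) (list_prod ll (bool_lists (length gs)))) as [lz Hlz].
  - intros x _. apply in_prod; auto.
    rewrite <- (length_map (fun g => if excluded_middle_informative (sat (snd x) g)
                                     then true else false) gs).
    apply bool_lists_complete.
  - intros x y Hx Hy E. injection E; intros Es Ef. apply rg_ext; auto.
    intros g Hb. apply (signature_sat gs); auto.
    apply bounded_constraints_complete; auto.
  - exists lz. intros R2 [s0 [Hq ->]]. apply Hlz. eauto.
Qed.

(** The values of the moves out of [s] form a listed set: a move out of [s]
    is determined by its simple timed action and its target region. *)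
Lemma move_values_listed (T : RegT G) (D : RegD G) (s : conf G) :
  listed (fun p => exists m, Moves m /\ src m = rg s /\ p = mval T D s m).
Proof.
  destruct regions_listed as [lr Hlr].
  destruct (Act_fin G) as [al Hal]. destruct (Clk_fin G) as [cl Hcl].
  set (val := fun q : Act G * nat * Clk G * region G =>
                let '(a, b, c, R2) := q in mval T D s (rg s, (a, b, c), R2)).
  exists (map val (list_prod (list_prod (list_prod al (seq 0 (S k))) cl) lr)).
  intros p [[[R1 [[a b] c]] R2] [[_ [HR2 [Hb _]]] [_ ->]]].
  apply (in_map val _ (a, b, c, R2)).
  assert (In b (seq 0 (S k))) by (apply in_seq; lia).
  repeat apply in_prod; auto.
Qed.

Lemma Mstar_nonempty (T : RegT G) (D : RegD G) (s : conf G) (m0 : move G) :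
  Moves m0 -> src m0 = rg s -> exists m, Mstar T D s m.
Proof.
  intros Hm0 Hs0.
  destruct (listed_lexmin _ (move_values_listed T D s)) as [p [[m [Hm [Hsm ->]]] Hp]].
  { exists (mval T D s m0), m0; auto. }
  exists m; repeat split; auto. intros m' Hm' Hs'. apply Hp; eauto.
Qed.

Section Strategy.
Variable mu : conf G -> move G.
Hypothesis mu_strategy : is_strategy mu.
Hypothesis mu_reg_const : reg_const mu.

Lemma restrict_Max (s : conf G) (m : move G) :
  St G s -> isMin G (fst s) = false -> Moves m -> src m = rg s -> restrict mu m.
Proof.
  intros Hs Hmax Hm Hsrc. split; auto. left. rewrite Hsrc. exists s; split; auto.
  apply rg_self; auto.
Qed.

Lemma restrict_Min (s : conf G) (m : move G) :
  SMin s -> restrict mu m -> src m = rg s -> m = mu s.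
Proof.
  intros [Hs Hmin] [_ [[s'' [Hs'' Hmax]]|[s' [HS' [Hsr Hmu]]]]] Hsrc.
  - rewrite Hsrc in Hs''. destruct Hs'' as [E _]. congruence.
  - rewrite <- Hmu. apply mu_reg_const; [auto | split; auto | congruence].
Qed.

Lemma improve_fixed_Mstar (Choose : (move G -> Prop) -> move G) (T : RegT G)
  (D : RegD G) (s : conf G) :
  choose_spec Choose -> SMin s -> Improve Choose mu T D s = mu s ->
  Mstar T D s (mu s).
Proof.
  intros HC HSs HI. unfold Improve in HI.
  destruct (excluded_middle_informative (Mstar T D s (mu s))) as [M|M]; auto.
  rewrite <- HI. apply HC.
  destruct (mu_strategy s HSs) as [Hm Hsrc]. exact (Mstar_nonempty T D s (mu s) Hm Hsrc).
Qed.

End Strategy.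
End RegionGraphFacts.

Theorem mainTheorem16 (k : nat) (G : RTG k)
  (Choose : (move G -> Prop) -> move G) (mu : conf G -> move G)
  (T : RegT G) (D : RegD G) :
  choose_spec Choose ->
  is_strategy mu ->
  reg_const mu ->
  OptMax (restrict mu) T D ->
  (forall s, SMin s -> Improve Choose mu T D s = mu s) ->
  OptMinMax (@Moves k G) T D.
Proof.
  intros HC Hstr Hrc Hopt Himp s Hs.
  destruct (Hopt s Hs) as [Hfin Hnfin]. split; [exact Hfin|]. split.
  - (* Min: the value is that of μ(s), which lies in M_*(s). *)
    intros Hn Hmin. assert (HSs : SMin s) by (split; auto).
    destruct (Hnfin Hn) as [[m0 [[Hm0 Hr] [Hsrc ->]]] _].
    rewrite (restrict_Min mu Hrc s m0 HSs (conj Hm0 Hr) Hsrc).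
    destruct (improve_fixed_Mstar mu Hstr Choose T D s HC HSs (Himp s HSs)) as [Hm [Hsm Hle]].
    split; [exists (mu s); auto|].
    intros q [m' [Hm' [Hs' ->]]]. apply Hle; auto.
  - (* Max: the subgraph keeps all moves out of [s]. *)
    intros Hn Hmax. destruct (Hnfin Hn) as [[m0 [[Hm0 _] [Hsrc Heq]]] Hup].
    split; [exists m0; auto|].
    intros q [m' [Hm' [Hs' ->]]]. apply Hup.
    exists m'; split; [exact (restrict_Max mu s m' Hs Hmax Hm' Hs') | auto].
Qed.
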